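(* Let $L$ be the regular language over $\{0,1\}$ given by the regular expression \[ L = 1 + 011 + 110 + 11(01)^*\Bigl[00 + 00(11)^+ + (11)^+00 + (11)^*1011 + 1101(11)^*\Bigr](10)^*11 + 11(01)^*(11)^*01 + 10(11)^*(10)^*11 . \] Then a one-dimensional Peg Solitaire configuration $w\in\{0,1\}^*$ can be reduced to a configuration with exactly one peg if and only if $w \in 0^*L0^*$. In particular, the set of configurations reducible to a single peg is a regular language.
   Context: One-dimensional Peg Solitaire: a configuration is a finite word $w=c_0c_1\cdots c_{n-1}\in\{0,1\}^*$, describing a row of $n$ consecutive sites, where $c_i=1$ means site $i$ holds a peg and $c_i=0$ means site $i$ is a hole. The board consists exactly of these $n$ sites (no sites outside the word may be used). A move (hop) takes three consecutive sites $i,i+1,i+2$ (all within the board) such that one end site and the middle site hold pegs and the other end site is a hole, moves the end peg to the hole, and removes the peg from the middle site (i.e. $110\to001$ or $011\to100$ on those three sites). A configuration can be reduced to one peg if some sequence of hops leads to a configuration with exactly one peg. In regular expressions, $+$ denotes union, $u^*$ denotes zero or more repetitions of $u$, $u^+=uu^*$, and concatenation is juxtaposition. *)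

From mathcomp Require Import all_boot.
Set Implicit Arguments. Unset Strict Implicit. Unset Printing Implicit Defensive.

(* Configurations: words over {0,1}, encoded as seq bool (true = peg = 1). *)
Definition config := seq bool.

Definition hop (w w' : config) : Prop :=
  exists u v : config,
    (w = u ++ [:: true; true; false] ++ v /\ w' = u ++ [:: false; false; true] ++ v) \/
    (w = u ++ [:: false; true; true] ++ v /\ w' = u ++ [:: true; false; false] ++ v).

Inductive reach : config -> config -> Prop :=
| reach_refl w : reach w w
| reach_step w1 w2 w3 : hop w1 w2 -> reach w2 w3 -> reach w1 w3.

Definition reducible_to_one (w : config) : Prop :=
  exists w', reach w w' /\ count id w' = 1.

Inductive regex :=
| REps
| RChr of bool
| RAlt of regex & regex
| RCat of regex & regex
| RStar of regex.

Inductive matches : regex -> config -> Prop :=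
| m_eps : matches REps [::]
| m_chr b : matches (RChr b) [:: b]
| m_altl r s w : matches r w -> matches (RAlt r s) w
| m_altr r s w : matches s w -> matches (RAlt r s) w
| m_cat r s u v : matches r u -> matches s v -> matches (RCat r s) (u ++ v)
| m_star0 r : matches (RStar r) [::]
| m_starS r u v : matches r u -> matches (RStar r) v -> matches (RStar r) (u ++ v).

Definition RPlus (r : regex) : regex := RCat r (RStar r).

Fixpoint RWord (s : seq bool) : regex :=
  match s with [::] => REps | [:: b] => RChr b | b :: s' => RCat (RChr b) (RWord s') end.

Notation "'w0'" := false (only parsing).
Notation "'w1'" := true (only parsing).

Definition bracket : regex :=
  RAlt (RWord [:: w0; w0])
  (RAlt (RCat (RWord [:: w0; w0]) (RPlus (RWord [:: w1; w1])))
  (RAlt (RCat (RPlus (RWord [:: w1; w1])) (RWord [:: w0; w0]))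
  (RAlt (RCat (RStar (RWord [:: w1; w1])) (RWord [:: w1; w0; w1; w1]))
        (RCat (RWord [:: w1; w1; w0; w1]) (RStar (RWord [:: w1; w1])))))).

Definition L : regex :=
  RAlt (RWord [:: w1])
  (RAlt (RWord [:: w0; w1; w1])
  (RAlt (RWord [:: w1; w1; w0])
  (RAlt (RCat (RWord [:: w1; w1]) (RCat (RStar (RWord [:: w0; w1]))
          (RCat bracket (RCat (RStar (RWord [:: w1; w0])) (RWord [:: w1; w1])))))
  (RAlt (RCat (RWord [:: w1; w1]) (RCat (RStar (RWord [:: w0; w1]))
          (RCat (RStar (RWord [:: w1; w1])) (RWord [:: w0; w1]))))
        (RCat (RWord [:: w1; w0]) (RCat (RStar (RWord [:: w1; w1]))
          (RCat (RStar (RWord [:: w1; w0])) (RWord [:: w1; w1])))))))).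

Definition L_padded : regex :=
  RCat (RStar (RChr false)) (RCat L (RStar (RChr false))).

(* A language P characterizes the configurations reducible to one peg as soon
   as it contains the one-peg words, is closed under inverse hops, contains no
   peg-free word, and every word of P with at least two pegs has a hop into P.
   For P = 0^*L0^* these four properties are finite-state facts.  We build a
   DFA for P from Antimirov partial derivatives; closure under inverse hops is
   a simulation relation on pairs of DFA states, and the forward hop property
   is read off a subset construction for an automaton that reads a word while
   guessing where a hop happens.  The automata are computed by [vm_compute]
   and only their closure properties are checked; the search producing them
   needs no proof. *)

From HB Require Import structures.
From mathcomp Require Import all_boot.
From Stdlib Require Import Setoid.

Set Implicit Arguments. Unset Strict Implicit. Unset Printing Implicit Defensive.

Lemma hop_count w w' : hop w w' -> count id w = (count id w').+1.
Proof.
by case=> u [v [[-> ->]|[-> ->]]]; rewrite !count_cat /= !addSn !add0n ?addnS.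
Qed.

Lemma hop_rcons w w' c : hop w w' -> hop (rcons w c) (rcons w' c).
Proof.
by case=> u [v [[-> ->]|[-> ->]]]; exists u, (rcons v c); [left|right];
  rewrite !rcons_cat.
Qed.

Lemma reducible_to_one_iff (P : config -> Prop) :
    (forall w, count id w = 1 -> P w) ->
    (forall w w', hop w w' -> P w' -> P w) ->
    (forall w, P w -> 0 < count id w) ->
    (forall w, P w -> 1 < count id w -> exists2 w', hop w w' & P w') ->
  forall w, reducible_to_one w <-> P w.
Proof.
move=> P_one P_back P_pos P_fwd w; split.
  case=> w' [w_w' w'_one]; elim: w_w' w'_one => [w1 /P_one //|w1 w2 w3 h _ IH].
  by move/IH; apply: P_back.
elim: {w}(count id w) {-2}w (leqnn (count id w)) => [|n IH] w le_wn Pw.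
  by move: (P_pos w Pw); rewrite lt0n -leqn0 le_wn.
have [lt1w|] := ltnP 1 (count id w); last first.
  move=> le_w1; exists w; split; first exact: reach_refl.
  by apply/eqP; rewrite eqn_leq le_w1 P_pos.
have [w' h Pw'] := P_fwd w Pw lt1w.
have [w'' [w'_w'' w''_one]] : reducible_to_one w'.
  by apply: IH Pw'; rewrite -ltnS -(hop_count h).
by exists w''; split; first exact: reach_step h w'_w''.
Qed.

Lemma foldl_inv (T S : Type) (f : T -> S -> T) (P : pred T) x s :
  P x -> (forall y a, P y -> P (f y a)) -> P (foldl f x s).
Proof. by move=> Px fP; elim: s x Px => //= a s IH x /(fP x a) /IH. Qed.

Fixpoint regex_eqb (r s : regex) : bool :=
  match r, s with
  | REps, REps => true
  | RChr a, RChr b => a == b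
  | RAlt r1 r2, RAlt s1 s2 => regex_eqb r1 s1 && regex_eqb r2 s2
  | RCat r1 r2, RCat s1 s2 => regex_eqb r1 s1 && regex_eqb r2 s2
  | RStar r1, RStar s1 => regex_eqb r1 s1
  | _, _ => false
  end.

Lemma regex_eqbP : Equality.axiom regex_eqb.
Proof.
elim=> [|a|r1 IH1 r2 IH2|r1 IH1 r2 IH2|r1 IH1] [|b|s1 s2|s1 s2|s1] /=;
  try by constructor.
- by apply: (iffP eqP) => [->|[]].
- by case: (IH1 s1) => [->|?]; case: (IH2 s2) => [->|?]; constructor; congruence.
- by case: (IH1 s1) => [->|?]; case: (IH2 s2) => [->|?]; constructor; congruence.
- by apply: (iffP (IH1 s1)) => [->|[]].
Qed.

HB.instance Definition _ := hasDecEq.Build regex regex_eqbP.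

Fixpoint nullable r :=
  match r with
  | REps | RStar _ => true
  | RChr _ => false
  | RAlt r s => nullable r || nullable s
  | RCat r s => nullable r && nullable s
  end.

Fixpoint pderiv (b : bool) r : seq regex :=
  match r with
  | REps => [::]
  | RChr c => if c == b then [:: REps] else [::]
  | RAlt r s => pderiv b r ++ pderiv b s
  | RCat r s =>
      [seq RCat x s | x <- pderiv b r] ++ (if nullable r then pderiv b s else [::])
  | RStar r => [seq RCat x (RStar r) | x <- pderiv b r]
  end.

Lemma nullableP r : reflect (matches r [::]) (nullable r).
Proof.
apply: (iffP idP).
  elim: r => //= [|r1 IH1 r2 IH2|r1 IH1 r2 IH2|r1 _ _]; try by constructor.
    by case/orP=> [/IH1|/IH2]; [apply: m_altl|apply: m_altr].
  by case/andP=> /IH1 ? /IH2 ?; rewrite -[[::]]cat0s; constructor.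
move Enil: [::] => w m.
elim: m Enil => //= [r1 r2 w1 _ IH /IH -> //|r1 r2 w1 _ IH /IH ->|].
  by rewrite orbT.
by move=> r1 r2 [|//] [|//] _ IH1 _ IH2 _; rewrite IH1 ?IH2.
Qed.

Lemma pderiv_sound b r x w : x \in pderiv b r -> matches x w -> matches r (b :: w).
Proof.
elim: r x w => [|c|r IHr s IHs|r IHr s IHs|r IHr] x w //=.
- by case: eqP => // -> /[!inE] /eqP -> m; inversion m; constructor.
- by rewrite mem_cat => /orP[] ? ?; [apply: m_altl|apply: m_altr]; eauto.
- rewrite mem_cat => /orP[/mapP[y y_r ->] m|].
    by inversion m; subst; rewrite -cat_cons; constructor; eauto.
  case: ifP => // /nullableP r_nil x_s m.
  by rewrite -[b :: w]cat0s; constructor; eauto.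
- by case/mapP=> y y_r -> m; inversion m; subst; rewrite -cat_cons; constructor; eauto.
Qed.

Lemma pderiv_complete b r w :
  matches r (b :: w) -> exists2 x, x \in pderiv b r & matches x w.
Proof.
move Ebw: (b :: w) => bw m; move: Ebw => /esym; elim: m b w => {r} //=.
- by move=> c b w [-> <-]; exists REps; rewrite ?eqxx ?inE //; constructor.
- by move=> r s w _ IH b w' /IH[x x_r m]; exists x; rewrite ?mem_cat ?x_r.
- by move=> r s w _ IH b w' /IH[x x_s m]; exists x; rewrite ?mem_cat ?x_s ?orbT.
- move=> r s [|c u] v m_u IHu m_v IHv b w /=.
    move=> /IHv[x x_s m]; exists x => //.
    by rewrite mem_cat (introT (nullableP r) m_u) x_s orbT.
  case=> <- <-; have [x x_r m] := IHu c u erefl.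
  by exists (RCat x s); [rewrite mem_cat map_f|constructor].
- move=> r [|c u] v m_u IHu m_v IHv b w /=; first exact: IHv.
  case=> <- <-; have [x x_r m] := IHu c u erefl.
  by exists (RCat x (RStar r)); [rewrite map_f|constructor].
Qed.

Definition matches_some (S : seq regex) w := exists2 x, x \in S & matches x w.

Definition pderivs b (S : seq regex) := undup (flatten [seq pderiv b r | r <- S]).

Lemma matches_some_nil S : matches_some S [::] <-> has nullable S.
Proof.
split; first by case=> x x_S /nullableP x_nil; apply/hasP; exists x.
by case/hasP=> x x_S /nullableP; exists x.
Qed.

Lemma matches_some_cons S b w :
  matches_some S (b :: w) <-> matches_some (pderivs b S) w.
Proof.
split.
  case=> x x_S /pderiv_complete[y y_x m]; exists y => //.
  by rewrite mem_undup; apply/flatten_mapP; exists x.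
case=> y; rewrite mem_undup => /flatten_mapP[x x_S y_x] m.
by exists x; last exact: pderiv_sound y_x m.
Qed.

Lemma eq_matches_some S T w : S =i T -> matches_some S w -> matches_some T w.
Proof. by move=> eqST [x x_S m]; exists x; rewrite // -eqST. Qed.

Section DFA.

Variables (delta : nat -> bool -> nat) (accept : pred nat).

Definition run := foldl delta.

Lemma run_cat i u v : run i (u ++ v) = run (run i u) v.
Proof. exact: foldl_cat. Qed.

Definition simulation (R : seq (nat * nat)) :=
  all (fun p => (accept p.1 ==> accept p.2) &&
                all (fun b => (delta p.1 b, delta p.2 b) \in R) [:: false; true]) R.

Lemma simulation_run R i j w :
  simulation R -> (i, j) \in R -> accept (run i w) -> accept (run j w).
Proof.
move=> simR; elim: w i j => [|b w IH] i j R_ij;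
  have /andP[acc /allP succ] := allP simR _ R_ij; first exact: implyP acc.
by apply: IH; apply: succ; case: b.
Qed.

Definition hop_pairs i :=
  [:: (run i [:: false; false; true], run i [:: true; true; false]);
      (run i [:: true; false; false], run i [:: false; true; true])].

Lemma accept_hop_back R s w w' :
    simulation R -> (forall u, {subset hop_pairs (run s u) <= R}) ->
  hop w w' -> accept (run s w') -> accept (run s w).
Proof.
move=> simR hopR [u [v [[-> ->]|[-> ->]]]]; rewrite !run_cat;
  by apply: (simulation_run simR); apply: (hopR u); rewrite /hop_pairs !inE eqxx ?orbT.
Qed.

(* A tracked pair (q, k) records the state q reached on the word obtained from
   the prefix w read so far by a hop that has been guessed: k = 0 means no hop
   yet; k = 1, 2 and k = 3, 4 are halfway through rewriting 110 into 001 and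
   011 into 100; k = 5 means the hop is complete. *)
Definition tracks s (w : config) (p : nat * nat) : Prop :=
  let: (q, k) := p in
  match k with
  | 0 => q = run s w
  | 1 => exists u, w = u ++ [:: true] /\ q = run s (u ++ [:: false])
  | 2 => exists u, w = u ++ [:: true; true] /\ q = run s (u ++ [:: false; false])
  | 3 => exists u, w = u ++ [:: false] /\ q = run s (u ++ [:: true])
  | 4 => exists u, w = u ++ [:: false; true] /\ q = run s (u ++ [:: true; false])
  | 5 => exists2 w', hop w w' & q = run s w'
  | _ => False
  end.

Definition track_step (p : nat * nat) (c : bool) : seq (nat * nat) :=
  let: (q, k) := p in
  match k, c with
  | 0, false => [:: (delta q false, 0); (delta q true, 3)]
  | 0, true => [:: (delta q true, 0); (delta q false, 1)]
  | 1, true | 3, true | 4, true => [:: (delta q false, k.+1)]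
  | 2, false => [:: (delta q true, 5)]
  | 5, _ => [:: (delta q c, 5)]
  | _, _ => [::]
  end.

Lemma tracks_step s w p c p' :
  tracks s w p -> p' \in track_step p c -> tracks s (rcons w c) p'.
Proof.
rewrite -!cats1; case: p => q [|[|[|[|[|[|k]]]]]] //=.
- move=> ->; case: c => /[!inE] /orP[]/eqP-> /=; rewrite ?run_cat //;
  by exists w; rewrite ?run_cat.
- case=> u [-> ->]; case: c => // /[!inE] /eqP-> /=.
  by exists u; rewrite -catA !run_cat.
- case=> u [-> ->]; case: c => // /[!inE] /eqP-> /=.
  exists (u ++ [:: false; false; true]); last by rewrite !run_cat.
  by exists u, [::]; left; rewrite -catA.
- case=> u [-> ->]; case: c => // /[!inE] /eqP-> /=.
  by exists u; rewrite -catA !run_cat.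
- case=> u [-> ->]; case: c => // /[!inE] /eqP-> /=.
  exists (u ++ [:: true; false; false]); last by rewrite !run_cat.
  by exists u, [::]; right; rewrite -catA.
- case=> w' h -> /[!inE] /eqP-> /=; exists (w' ++ [:: c]); last by rewrite run_cat.
  by rewrite !cats1; apply: hop_rcons.
Qed.

Definition lexleq (p q : nat * nat) := (p.1 < q.1) || (p.1 == q.1) && (p.2 <= q.2).

(* A tracker is a pair (min (count id w) 2, T) where T, sorted so that equal
   sets of tracked pairs are equal lists, is the set of all tracked pairs. *)
Definition tracker_step (t : nat * seq (nat * nat)) (c : bool) :=
  (minn (t.1 + c) 2, undup (sort lexleq (flatten [seq track_step p c | p <- t.2]))).

Definition tracker_run s := foldl tracker_step (0, [:: (s, 0)]).

Lemma tracker_run_spec s w : let t := tracker_run s w in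
  [/\ t.1 = minn (count id w) 2, (run s w, 0) \in t.2
    & forall p, p \in t.2 -> tracks s w p].
Proof.
elim/last_ind: w => [|w c [IH1 IH2 IH3]] /=.
  by split=> [||p /[!inE] /eqP->]; rewrite ?inE.
rewrite /tracker_run foldl_rcons -/(tracker_run s w) -cats1 count_cat /= IH1.
split.
- by case: c; case: (count id w) => [|[|k]]; rewrite ?addn0.
- rewrite mem_undup mem_sort; apply/flatten_mapP; exists (run s w, 0) => //.
  by rewrite /= run_cat; case: c; rewrite !inE eqxx.
- move=> p'; rewrite mem_undup mem_sort => /flatten_mapP[p /IH3 w_p p'_p].
  by rewrite cats1; apply: tracks_step p'_p.
Qed.

Definition tracker_ok (t : nat * seq (nat * nat)) :=
  all (fun p => (p.2 == 0) ==> accept p.1 ==>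
         (0 < t.1) && ((t.1 == 2) ==> has (fun q => (q.2 == 5) && accept q.1) t.2)) t.2.

Definition tracker_closed (T : seq (nat * seq (nat * nat))) :=
  all (fun t => [&& tracker_step t false \in T, tracker_step t true \in T
                  & tracker_ok t]) T.

Lemma accept_hop_forward T s w :
    (0, [:: (s, 0)]) \in T -> tracker_closed T -> accept (run s w) ->
  0 < count id w /\ (1 < count id w -> exists2 w', hop w w' & accept (run s w')).
Proof.
move=> T_init /allP closedT acc.
have T_run : tracker_run s w \in T.
  apply: (foldl_inv (P := mem T)) => // t c /closedT /and3P[? ? _]; by case: c.
have [count_w run_w tracks_w] := tracker_run_spec s w.
have /and3P[_ _ /allP ok_run] := closedT _ T_run.
have /= /implyP/(_ acc)/andP[pos_w two_w] := ok_run _ run_w.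
rewrite count_w in pos_w two_w; split; first by move: pos_w; case: (count id w).
move=> gt1_w; have min2 : minn (count id w) 2 == 2.
  by rewrite eqn_leq geq_minr leq_min gt1_w.
case/hasP: (implyP two_w min2) => -[q k] t_qk /andP[/eqP/= k5 acc_q].
by move: acc_q; have := tracks_w _ t_qk; rewrite /= k5 => -[w' h ->]; exists w'.
Qed.

End DFA.

Definition seteq (S T : seq regex) := all (mem T) S && all (mem S) T.

Lemma seteqP S T : reflect (S =i T) (seteq S T).
Proof.
apply: (iffP andP) => [[/allP ST /allP TS] x|eqST].
  by apply/idP/idP; [apply: ST|apply: TS].
by split; apply/allP => x; rewrite inE eqST.
Qed.

Fixpoint explore (fuel : nat) (states : seq (seq regex)) (i : nat) :=
  if fuel is fuel'.+1 then
    if i < size states then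
      let X := nth [::] states i in
      let add states T := if has (seteq T) states then states else rcons states T in
      explore fuel' (add (add states (pderivs false X)) (pderivs true X)) i.+1
    else states
  else states.

Definition dfa_states := Eval vm_compute in explore 200 [:: [:: L_padded]] 0.

Definition dfa_size := size dfa_states.

Definition dfa_table := Eval vm_compute in
  [seq (find (seteq (pderivs false X)) dfa_states,
        find (seteq (pderivs true X)) dfa_states) | X <- dfa_states].

Definition dfa_delta i (b : bool) :=
  let: (i0, i1) := nth (0, 0) dfa_table i in if b then i1 else i0.

Definition dfa_accept i := has nullable (nth [::] dfa_states i).

Lemma dfa_delta_spec i b : i < dfa_size ->
  dfa_delta i b < dfa_size /\
  nth [::] dfa_states (dfa_delta i b) =i pderivs b (nth [::] dfa_states i).
Proof.
have /allP dfa_ok : all (fun i => all (fun b =>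
    (dfa_delta i b < dfa_size) &&
    seteq (pderivs b (nth [::] dfa_states i)) (nth [::] dfa_states (dfa_delta i b)))
  [:: false; true]) (iota 0 dfa_size) by vm_compute.
move=> lt_i; have := dfa_ok i; rewrite mem_iota lt_i => /(_ isT)/allP/(_ b).
by rewrite inE; case: b => /(_ isT)/andP[-> /seteqP eq_b]; split=> // x; rewrite eq_b.
Qed.

Lemma run_dfa_lt i w : i < dfa_size -> run dfa_delta i w < dfa_size.
Proof.
move=> lt_i; apply: (foldl_inv (P := gtn dfa_size)) => // j b lt_j.
exact: (dfa_delta_spec b lt_j).1.
Qed.

Lemma matches_some_run i w : i < dfa_size ->
  matches_some (nth [::] dfa_states i) w <-> dfa_accept (run dfa_delta i w).
Proof.
elim: w i => [|b w IH] i lt_i; first exact: matches_some_nil.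
have [lt_ib eq_ib] := dfa_delta_spec b lt_i.
rewrite matches_some_cons /= -IH //.
by split; apply: eq_matches_some => x; rewrite eq_ib.
Qed.

Lemma matches_L_padded_run w : matches L_padded w <-> dfa_accept (run dfa_delta 0 w).
Proof.
have dfa_states0 : nth [::] dfa_states 0 = [:: L_padded] by vm_compute.
rewrite -matches_some_run ?dfa_states0 //.
by split=> [m|[x /[!inE] /eqP->]] //; exists L_padded; rewrite ?inE.
Qed.

Fixpoint saturate (T : eqType) (next : T -> seq T) (fuel : nat) (todo seen : seq T) :=
  if fuel is fuel'.+1 then
    if todo is x :: todo' then
      if x \in seen then saturate next fuel' todo' seen
      else saturate next fuel' (next x ++ todo') (x :: seen)
    else seen
  else seen.

Definition back_sim := Eval vm_compute in
  saturate (fun p => [:: (dfa_delta p.1 false, dfa_delta p.2 false);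
                         (dfa_delta p.1 true, dfa_delta p.2 true)])
    1000 (flatten [seq hop_pairs dfa_delta i | i <- iota 0 dfa_size]) [::].

Lemma back_sim_simulation : simulation dfa_delta dfa_accept back_sim.
Proof. by vm_compute. Qed.

Lemma hop_pairs_back_sim i : i < dfa_size -> {subset hop_pairs dfa_delta i <= back_sim}.
Proof.
have /allP hop_ok : all (fun i => all (mem back_sim) (hop_pairs dfa_delta i))
  (iota 0 dfa_size) by vm_compute.
by move=> lt_i; apply/allP; apply: hop_ok; rewrite mem_iota.
Qed.

Definition trackers := Eval vm_compute in
  saturate (fun t => [:: tracker_step dfa_delta t false; tracker_step dfa_delta t true])
    1000 [:: (0, [:: (0, 0)])] [::].

Lemma trackers_init : (0, [:: (0, 0)]) \in trackers.
Proof. by vm_compute. Qed.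

Lemma trackers_closed : tracker_closed dfa_delta dfa_accept trackers.
Proof. by vm_compute. Qed.

Lemma count_eq1 w :
  count id w = 1 -> exists a b, w = nseq a false ++ true :: nseq b false.
Proof.
elim: w => //= -[] w IH.
  case=> count0; exists 0, (size w); congr (_ :: _).
  by elim: w count0 {IH} => //= -[] w IHw // /IHw {1}->.
by rewrite add0n => /IH[a [b ->]]; exists a.+1, b.
Qed.

Lemma matches_star_false n : matches (RStar (RChr false)) (nseq n false).
Proof.
elim: n => [|n IH]; first exact: m_star0.
by rewrite /= -cat1s; apply: m_starS => //; apply: m_chr.
Qed.

Lemma matches_L_padded_one_peg w : count id w = 1 -> matches L_padded w.
Proof.
case/count_eq1=> a [b ->]; apply: m_cat; first exact: matches_star_false.
rewrite -cat1s; apply: m_cat; last exact: matches_star_false.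
exact: m_altl (m_chr true).
Qed.

Theorem theorem1 (w : seq bool) :
  reducible_to_one w <-> matches L_padded w.
Proof.
have fwd := accept_hop_forward trackers_init trackers_closed.
apply: reducible_to_one_iff => {w} [w|w w' h|w|w];
  first exact: matches_L_padded_one_peg; rewrite !matches_L_padded_run.
- apply: accept_hop_back h; first exact: back_sim_simulation.
  by move=> u; apply: hop_pairs_back_sim; apply: run_dfa_lt.
- by case/fwd.
- by case/fwd=> _ hop_fwd /hop_fwd[w' h acc]; exists w'; rewrite ?matches_L_padded_run.
Qed.
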